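(* Let $S$ be a finite subgroup of $O(n)$. Then there exist an $S$-invariant subset $\Omega_S\subset\mathbb R^n$ which is the complement of a finite union of hyperplanes, and an open subset $U_S\subset\Omega_S$, such that $sU_S\cap U_S=\emptyset$ for all $s\in S\setminus\{I\}$ and $\bigcup_{s\in S}sU_S=\Omega_S$. *)

From HB Require Import structures.
From mathcomp Require Import all_boot all_order all_algebra.
From mathcomp Require Import all_classical all_reals topology normedtype.
Set Implicit Arguments. Unset Strict Implicit. Unset Printing Implicit Defensive.
Import Order.TTheory GRing.Theory Num.Theory.
Import numFieldNormedType.Exports.
Local Open Scope classical_set_scope.
Local Open Scope ring_scope.

(* Vectors of R^n are column vectors 'cV[R]_n; a matrix s acts by x |-> s *m x. *)

Definition orthogonal_mx (R : realType) (n : nat) (A : 'M[R]_n) : Prop :=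
  A *m A^T = 1%:M.

Definition finite_subgroup_On (R : realType) (n : nat) (S : seq 'M[R]_n) : Prop :=
  [/\ forall s, s \in S -> orthogonal_mx s,
      1%:M \in S,
      forall s t, s \in S -> t \in S -> s *m t \in S
    & forall s, s \in S -> s^T \in S].

Definition hyperplane (R : realType) (n : nat) (a : 'cV[R]_n) (c : R)
  : set 'cV[R]_n := [set x | (a^T *m x) 0 0 = c].

Definition complement_of_hyperplanes (R : realType) (n : nat)
  (Omega : set 'cV[R]_n) : Prop :=
  exists H : seq ('cV[R]_n * R),
    (forall h, h \in H -> h.1 != 0) /\
    Omega = ~` [set x | exists2 h, h \in H & hyperplane h.1 h.2 x].

Definition mx_image (R : realType) (n : nat) (s : 'M[R]_n) (A : set 'cV[R]_n)
  : set 'cV[R]_n := [set s *m x | x in A].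

From HB Require Import structures.
From mathcomp Require Import all_boot all_order all_algebra.
From mathcomp Require Import all_classical all_reals topology normedtype.
Set Implicit Arguments. Unset Strict Implicit. Unset Printing Implicit Defensive.
Import Order.TTheory GRing.Theory Num.Theory.
Import numFieldNormedType.Exports.
Local Open Scope classical_set_scope.
Local Open Scope ring_scope.

(* Choose v whose orbit points s v (s in S) are pairwise distinct.  Off the
   finitely many hyperplanes <s v - t v, x> = 0, the values <s v, x> are
   pairwise distinct, so exactly one s in S maximizes <s v, x>.  U is the set
   where the identity is the maximizer (the Dirichlet domain of v); since S
   acts by isometries, s U is the set where s is the maximizer. *)

Lemma sum_norm_addr1_notin (R : numDomainType) (s : seq R) :
  \sum_(x <- s) `|x| + 1 \notin s.
Proof.
set t := _ + 1; apply/negP => ts.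
have t_ge0 : 0 <= t by rewrite addr_ge0 ?sumr_ge0.
have : `|t| <= \sum_(x <- s) `|x|.
  by rewrite (big_rem t ts) /= lerDl sumr_ge0.
by rewrite ger0_norm // gerDl ler10.
Qed.

Lemma exists_argmax_seq (T : eqType) d (O : orderType d) (s : seq T)
    (f : T -> O) :
  s != [::] -> exists2 x, x \in s & forall y, y \in s -> (f y <= f x)%O.
Proof.
elim: s => [//|a [|b s] IH] _.
  by exists a => [|y]; rewrite ?mem_head // inE => /eqP->.
have [x xs max_x] := IH isT.
have [fa_le|fx_lt] := leP (f a) (f x).
  exists x; first by rewrite in_cons xs orbT.
  by move=> y; rewrite in_cons => /orP[/eqP->//|/max_x].
exists a; first exact: mem_head.
move=> y; rewrite in_cons => /orP[/eqP->//|/max_x fy_le].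
exact: le_trans fy_le (ltW fx_lt).
Qed.

Lemma mulmx_line_eq0 (F : fieldType) m n (M : 'M[F]_(m, n)) (v w : 'cV[F]_n) :
  M *m v != 0 \/ M *m w != 0 ->
  exists t0, forall t, M *m (v + t *: w) = 0 -> t = t0.
Proof.
have [Mw0|/matrix0Pn[i [j]]] := eqVneq (M *m w) 0.
  case=> [Mv_neq0|] //; exists 0 => t.
  rewrite mulmxDr -scalemxAr Mw0 scaler0 addr0 => /eqP.
  by rewrite (negPf Mv_neq0).
rewrite (ord1 j) => Mwi_neq0 _.
exists (- ((M *m v) i 0 / (M *m w) i 0)) => t.
rewrite mulmxDr -scalemxAr => /matrixP/(_ i 0).
rewrite mxE [X in _ + X = _]mxE [X in _ = X]mxE => /eqP.
by rewrite addrC addr_eq0 -mulNr => /eqP <-; rewrite mulfK.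
Qed.

Section SeparatingVector.
Variables (F : numFieldType) (m n : nat).
Implicit Types (M : 'M[F]_(m, n)) (v w : 'cV[F]_n).

Lemma line_avoids_kernels (L : seq 'M[F]_(m, n)) v w :
  (forall M, M \in L -> M *m v != 0 \/ M *m w != 0) ->
  exists t, forall M, M \in L -> M *m (v + t *: w) != 0.
Proof.
move=> Lvw.
have [bad bad_cover] : exists bad : seq F,
    forall M t, M \in L -> M *m (v + t *: w) = 0 -> t \in bad.
  elim: L Lvw => [|M L IH] Lvw; first by exists [::].
  have [bad Hbad] : exists bad : seq F,
      forall N t, N \in L -> N *m (v + t *: w) = 0 -> t \in bad.
    by apply: IH => N NL; apply: Lvw; rewrite in_cons NL orbT.
  have [t0 Ht0] := mulmx_line_eq0 (Lvw M (mem_head _ _)).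
  exists (t0 :: bad) => N t; rewrite !in_cons.
  by case/orP=> [/eqP-> /Ht0->|NL /(Hbad _ _ NL)->]; rewrite ?eqxx ?orbT.
exists (\sum_(x <- bad) `|x| + 1) => M ML; apply/eqP => /(bad_cover _ _ ML).
exact/negP/sum_norm_addr1_notin.
Qed.

Lemma avoid_kernels (L : seq 'M[F]_(m, n)) :
  (forall M, M \in L -> M != 0) -> exists v, forall M, M \in L -> M *m v != 0.
Proof.
elim: L => [|M L IH] L_neq0; first by exists 0.
have [v Lv] : exists v, forall N, N \in L -> N *m v != 0.
  by apply: IH => N NL; apply: L_neq0; rewrite in_cons NL orbT.
have [w Mw] : exists w, M *m w != 0.
  have /matrix0Pn[i [j Mij]] := L_neq0 M (mem_head _ _).
  exists (delta_mx j 0); apply/matrix0Pn; exists i, 0.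
  by rewrite -colE mxE.
have [|t Ht] := line_avoids_kernels (L := M :: L) (v := v) (w := w).
  by move=> N; rewrite in_cons => /orP[/eqP->|/Lv]; [right|left].
by exists (v + t *: w).
Qed.

Lemma exists_separating_vector (S : seq 'M[F]_(m, n)) :
  exists v, {in S &, injective (fun s => s *m v)}.
Proof.
pose L := [seq d <- [seq s - t | s <- S, t <- S] | d != 0].
have [|v Lv] := avoid_kernels (L := L).
  by move=> d; rewrite mem_filter => /andP[].
exists v => s t sS tS /eqP; rewrite -subr_eq0 -mulmxBl.
apply: contraTeq; rewrite -subr_eq0 => st_neq0; apply: Lv.
by rewrite mem_filter st_neq0; apply/allpairsP; exists (s, t).
Qed.

End SeparatingVector.

Definition dotmx (R : comNzRingType) (n : nat) (a x : 'cV[R]_n) : R :=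
  (a^T *m x) 0 0.

Lemma dotmxE (R : comNzRingType) n (a x : 'cV[R]_n) :
  dotmx a x = \sum_i a i 0 * x i 0.
Proof. by rewrite /dotmx mxE; apply: eq_bigr => i _; rewrite mxE. Qed.

Lemma dotmx_mulmxr (R : comNzRingType) n (a x : 'cV[R]_n) (s : 'M[R]_n) :
  dotmx a (s *m x) = dotmx (s^T *m a) x.
Proof. by rewrite /dotmx trmx_mul trmxK mulmxA. Qed.

Lemma dotmxBl (R : comNzRingType) n (a b x : 'cV[R]_n) :
  dotmx (a - b) x = dotmx a x - dotmx b x.
Proof.
by rewrite !dotmxE -sumrB; apply: eq_bigr => i _; rewrite !mxE mulrBl.
Qed.

Lemma dotmx_continuous (R : numFieldType) n (a : 'cV[R]_n) :
  continuous (dotmx a).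
Proof.
rewrite (_ : dotmx a = fun x => \sum_i a i 0 * x i 0); last first.
  by apply: funext => x; rewrite dotmxE.
apply: continuous_big => [|i _ x]; first exact: add_continuous.
by apply: continuousM; [exact: cst_continuous | exact: coord_continuous].
Qed.

Lemma closed_hyperplane (R : realType) n (a : 'cV[R]_n) c :
  closed (hyperplane a c).
Proof.
have -> : hyperplane a c = dotmx a @^-1` [set y | y = c] by [].
apply: preimage_closed; last exact: closed_eq.
by move=> x _; exact: dotmx_continuous.
Qed.

Lemma open_complement_of_hyperplanes (R : realType) n (Omega : set 'cV[R]_n) :
  complement_of_hyperplanes Omega -> open Omega.
Proof.
move=> [H [_ ->]]; rewrite openC.
have -> : [set x | exists2 h, h \in H & hyperplane h.1 h.2 x] =
          \big[setU/set0]_(h <- H) hyperplane h.1 h.2 by rewrite -bigcup_seq.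
by apply: closed_bigsetU => h _; exact: closed_hyperplane.
Qed.

Lemma orthogonal_mx_trC (R : realType) n (s : 'M[R]_n) :
  orthogonal_mx s -> s^T *m s = 1%:M.
Proof. exact: mulmx1C. Qed.

Lemma orthogonal_mx_mulIl (R : realType) n p (s : 'M[R]_n) :
  orthogonal_mx s -> injective (@mulmx R n n p s).
Proof.
move=> /orthogonal_mx_trC sO t u /(congr1 (mulmx s^T)).
by rewrite !mulmxA sO !mul1mx.
Qed.

Section DirichletDomain.
Variables (R : realType) (n : nat) (S : seq 'M[R]_n) (v : 'cV[R]_n).
Hypothesis subgroupS : finite_subgroup_On S.
Hypothesis separating_v : {in S &, injective (fun s => s *m v)}.

Definition regular_points : set 'cV[R]_n :=
  [set x | {in S &, injective (fun s => dotmx (s *m v) x)}].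

Definition dirichlet_domain : set 'cV[R]_n :=
  [set x | regular_points x /\
           forall s, s \in S -> s != 1%:M -> dotmx (s *m v) x < dotmx v x].

Let orthS s : s \in S -> orthogonal_mx s.
Proof. by case: subgroupS => + _ _ _; apply. Qed.
Let oneS : 1%:M \in S. Proof. by case: subgroupS. Qed.
Let mulS s t : s \in S -> t \in S -> s *m t \in S.
Proof. by case: subgroupS => _ _ + _; apply. Qed.
Let trS s : s \in S -> s^T \in S.
Proof. by case: subgroupS => _ _ _; apply. Qed.

Let trmx_neq1 (s : 'M[R]_n) : s != 1%:M -> s^T != 1%:M.
Proof. by apply: contra => /eqP/(congr1 trmx); rewrite trmxK trmx1 => ->. Qed.

Lemma regular_points_mulmx s x :
  s \in S -> regular_points x -> regular_points (s *m x).
Proof.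
move=> sS xreg t u tS uS /=; rewrite !dotmx_mulmxr !mulmxA.
move=> /(xreg _ _ (mulS (trS sS) tS) (mulS (trS sS) uS)).
exact/orthogonal_mx_mulIl/orthS/trS.
Qed.

Lemma mx_image_regular_points s :
  s \in S -> mx_image s regular_points = regular_points.
Proof.
move=> sS; apply/seteqP; split => [_ [y yreg <-]|x xreg].
  exact: regular_points_mulmx.
exists (s^T *m x); first exact: regular_points_mulmx (trS sS) xreg.
by rewrite mulmxA orthS // mul1mx.
Qed.

Lemma dirichlet_domain_disjoint s :
  s \in S -> s != 1%:M ->
  mx_image s dirichlet_domain `&` dirichlet_domain = set0.
Proof.
move=> sS s_neq1; apply/seteqP; split => // _ [[y [_ ydom] <-] [_ sydom]].
have := sydom s sS s_neq1; have := ydom _ (trS sS) (trmx_neq1 s_neq1).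
rewrite !dotmx_mulmxr mulmxA (orthogonal_mx_trC (orthS sS)) mul1mx => lt1 lt2.
by have := lt_trans lt2 lt1; rewrite ltxx.
Qed.

Lemma regular_points_cover :
  regular_points = \bigcup_(s in [set s | s \in S]) mx_image s dirichlet_domain.
Proof.
apply/seteqP; split => [x xreg|_ [s sS [y [yreg _] <-]]]; last first.
  exact: regular_points_mulmx.
have [t tS max_t] : exists2 t, t \in S &
    forall u, u \in S -> dotmx (u *m v) x <= dotmx (t *m v) x.
  by apply: exists_argmax_seq; apply/eqP => S0; have := oneS; rewrite S0.
exists t => //; exists (t^T *m x); last by rewrite mulmxA orthS // mul1mx.
split => [|s sS s_neq1]; first exact: regular_points_mulmx (trS tS) xreg.
rewrite !dotmx_mulmxr !trmxK lt_neqAle mulmxA max_t ?mulS // andbT.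
(* Strictness: t *m s != t, and the values at the regular point x are
   pairwise distinct. *)
apply: contra s_neq1 => /eqP/(xreg _ _ (mulS tS sS) tS).
by rewrite -[X in _ = X]mulmx1 => /(orthogonal_mx_mulIl (orthS tS)) ->.
Qed.

Lemma regular_points_hyperplanes : complement_of_hyperplanes regular_points.
Proof.
exists [seq (d, 0) | d <- [seq t *m v - u *m v | t <- S, u <- S] & d != 0].
split=> [h /mapP[d]|]; first by rewrite mem_filter => /andP[d_neq0 _] ->.
apply/seteqP; split=> x.
  move=> xreg [h /mapP[d]]; rewrite mem_filter.
  case/andP=> d_neq0 /allpairsP[[t u] /= [tS uS d_def]] ->.
  rewrite {}d_def in d_neq0 *.
  change (dotmx (t *m v - u *m v) x = 0 -> False).
  rewrite dotmxBl => /eqP; rewrite subr_eq0 => /eqP /(xreg _ _ tS uS) tu.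
  by move: d_neq0; rewrite tu subrr eqxx.
move=> xoff t u tS uS /= Etu.
have [|tu_neq] := eqVneq (t *m v) (u *m v); first exact: separating_v.
exfalso; apply: xoff; exists (t *m v - u *m v, 0).
  apply/mapP; exists (t *m v - u *m v) => //.
  by rewrite mem_filter subr_eq0 tu_neq; apply/allpairsP; exists (t, u).
by change (dotmx (t *m v - u *m v) x = 0); rewrite dotmxBl Etu subrr.
Qed.

Lemma open_dirichlet_domain : open dirichlet_domain.
Proof.
have -> : dirichlet_domain = regular_points `&`
    \big[setI/setT]_(s <- S | s != 1%:M) [set x | 0 < dotmx (v - s *m v) x].
  rewrite -bigcap_seq_cond; apply/seteqP; split=> x [xreg xdom]; split=> // s.
    by case/andP=> sS s_neq1; rewrite /= dotmxBl subr_gt0; exact: xdom.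
  by move=> sS s_neq1; rewrite -subr_gt0 -dotmxBl; apply: xdom; rewrite /= sS.
apply: openI.
  exact/open_complement_of_hyperplanes/regular_points_hyperplanes.
elim/big_ind: _ => [|A B|s _]; [exact: openT | exact: openI |].
have -> : [set x | 0 < dotmx (v - s *m v) x] =
          dotmx (v - s *m v) @^-1` [set y | y > 0] by [].
by apply: open_comp; [move=> x _; exact: dotmx_continuous | exact: open_gt].
Qed.

End DirichletDomain.

Theorem lemmaA1 (R : realType) (n : nat) (S : seq 'M[R]_n) :
  finite_subgroup_On S ->
  exists (Omega U : set 'cV[R]_n),
    [/\ complement_of_hyperplanes Omega,
        (forall s, s \in S -> mx_image s Omega = Omega),
        open U /\
        U `<=` Omega,
        (forall s, s \in S -> s != 1%:M -> mx_image s U `&` U = set0)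
      & Omega = \bigcup_(s in [set s | s \in S]) mx_image s U].
Proof.
move=> subgroupS; have [v separating_v] := exists_separating_vector S.
exists (regular_points S v), (dirichlet_domain S v); split.
- exact: regular_points_hyperplanes.
- by move=> s; exact: mx_image_regular_points.
- by split; [exact: open_dirichlet_domain | move=> x []].
- by move=> s; exact: dirichlet_domain_disjoint.
- exact: regular_points_cover.
Qed.
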